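(* Let $L=\langle S,A,\to\rangle$ be a labelled transition system and $x,y\in\{o,b\}$. Then $\mathrel{\underline{\leftrightarrow}}_{(x,y)}$ has the stuttering property: whenever $t_0\xrightarrow{\tau}t_1\xrightarrow{\tau}\cdots\xrightarrow{\tau}t_k$ with $t_0\mathrel{\underline{\leftrightarrow}}_{(x,y)}t_k$, then $t_i\mathrel{\underline{\leftrightarrow}}_{(x,y)}t_j$ for all $0\le i,j\le k$.
   Context: An LTS is $\langle S,A,\to\rangle$ with states $S$, actions $A$ containing the internal action $\tau$, and $\to\subseteq S\times A\times S$; write $s\xrightarrow{a}t$, and $\twoheadrightarrow$ for the reflexive-transitive closure of $\xrightarrow{\tau}$. For $R\subseteq S\times S$ and $s,s',t$: $s\twoheadrightarrow_{o,R,t}s'$ iff $s\twoheadrightarrow s'$; $s\twoheadrightarrow_{b,R,t}s'$ iff $s\twoheadrightarrow s'$, $t\,R\,s$ and $t\,R\,s'$. For $x,y\in\{o,b\}$, a symmetric $R$ is an $(x,y)$-generic bisimulation if whenever $s\,R\,t$ and $s\xrightarrow{a}s'$, either $a=\tau$ and $s'\,R\,t$, or there exist $t',t_1,t_2$ with $t\twoheadrightarrow_{x,R,s}t_1\xrightarrow{a}t_2\twoheadrightarrow_{y,R,s'}t'$ and $s'\,R\,t'$. $s\mathrel{\underline{\leftrightarrow}}_{(x,y)}t$ iff some $(x,y)$-generic bisimulation relates $s$ and $t$. *)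

From Stdlib Require Import Relations.

Record LTS := {
  St : Type;
  Act : Type;
  tau : Act;
  step : St -> Act -> St -> Prop
}.

Definition tau_star (L : LTS) : St L -> St L -> Prop :=
  clos_refl_trans (St L) (fun s s' => step L s (tau L) s').

Inductive xy := o | b.

Definition gen_tau (L : LTS) (x : xy) (R : St L -> St L -> Prop)
  (t s s' : St L) : Prop :=
  match x with
  | o => tau_star L s s'
  | b => tau_star L s s' /\ R t s /\ R t s'
  end.

Definition symmetric_rel {T : Type} (R : T -> T -> Prop) : Prop :=
  forall s t, R s t -> R t s.

Definition generic_bisim (L : LTS) (x y : xy) (R : St L -> St L -> Prop) : Prop :=
  symmetric_rel R /\
  forall s t a s', R s t -> step L s a s' ->
    (a = tau L /\ R s' t) \/
    exists t' t1 t2,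
      gen_tau L x R s t t1 /\ step L t1 a t2 /\ gen_tau L y R s' t2 t' /\ R s' t'.

Definition bisimilar (L : LTS) (x y : xy) (s t : St L) : Prop :=
  exists R, generic_bisim L x y R /\ R s t.

(* Following Basten's proof that branching bisimilarity is an equivalence, work
   with semi-bisimulations, which may also answer a tau-step of s by tau-moves of
   t with an idle step in the middle.  Semi-bisimulations transfer whole
   tau-paths, which makes the composition of two of them again one, so
   semi-bisimilarity is transitive; with transitivity it is closed under
   stuttering: a state on a tau-path between two semi-bisimilar states is related
   to both of them.  Stuttering in turn lets every idle answer be replaced by a
   genuine tau-step, so semi-bisimilarity is an (x,y)-generic bisimulation and
   hence coincides with bisimilarity. *)
From Stdlib Require Import Relations Lia.

Section ClosReflTrans.

Variables (A : Type) (r : relation A).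

Lemma clos_refl_trans_last (p q : A) :
  clos_refl_trans A r p q -> p = q \/ exists v, clos_refl_trans A r p v /\ r v q.
Proof.
  intros Hpq. apply clos_rt_rtn1 in Hpq.
  destruct Hpq as [|v ? Hvq Hpv]; [now left|].
  right. exists v. split; [now apply clos_rtn1_rt | exact Hvq].
Qed.

Lemma clos_refl_trans_first (p q : A) :
  clos_refl_trans A r p q -> p = q \/ exists v, r p v /\ clos_refl_trans A r v q.
Proof.
  intros Hpq. apply clos_rt_rt1n in Hpq.
  destruct Hpq as [|v ? Hpv Hvq]; [now left|].
  right. exists v. split; [exact Hpv | now apply clos_rt1n_rt].
Qed.

Lemma clos_refl_trans_chain (f : nat -> A) (k : nat) :
  (forall i, i < k -> r (f i) (f (S i))) ->
  forall n m, n <= m -> m <= k -> clos_refl_trans A r (f n) (f m).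
Proof.
  intros Hchain n m Hnm. induction Hnm as [|m Hnm IH]; intros Hmk.
  - apply rt_refl.
  - apply rt_trans with (f m); [apply IH; lia | apply rt_step, Hchain; lia].
Qed.

End ClosReflTrans.

Lemma gen_tau_iff (L : LTS) (z : xy) (R : St L -> St L -> Prop) (t s s' : St L) :
  gen_tau L z R t s s' <-> tau_star L s s' /\ (z = b -> R t s /\ R t s').
Proof. destruct z; simpl; intuition discriminate. Qed.

Lemma gen_tau_tau_star (L : LTS) (z : xy) (R : St L -> St L -> Prop) (t s s' : St L) :
  gen_tau L z R t s s' -> tau_star L s s'.
Proof. now rewrite gen_tau_iff. Qed.

Section SemiBisimulation.

Variables (L : LTS) (x y : xy).

Definition step_or_idle (s : St L) (a : Act L) (s' : St L) : Prop :=
  step L s a s' \/ (a = tau L /\ s = s').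

Definition semi_matched (R : St L -> St L -> Prop) (s t : St L) (a : Act L)
    (s' : St L) : Prop :=
  exists t1 t2 t', gen_tau L x R s t t1 /\ step_or_idle t1 a t2 /\
    gen_tau L y R s' t2 t' /\ R s' t'.

Definition semi_bisim (R : St L -> St L -> Prop) : Prop :=
  symmetric_rel R /\
  forall s t a s', R s t -> step L s a s' -> semi_matched R s t a s'.

Definition semi_bisimilar (s t : St L) : Prop :=
  exists R, semi_bisim R /\ R s t.

Lemma semi_matched_idle (R : St L -> St L -> Prop) (s t s' : St L) :
  R s t -> R s' t -> semi_matched R s t (tau L) s'.
Proof.
  intros Hst Hs't. exists t, t, t. rewrite !gen_tau_iff.
  split; [split; [apply rt_refl | now split]|].
  split; [now right|].
  split; [split; [apply rt_refl | now split] | exact Hs't].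
Qed.

Lemma semi_matched_prepend (S R : St L -> St L -> Prop) (s t m : St L) (a : Act L)
    (s' : St L) :
  (forall p q, S p q -> R p q) -> R s t -> tau_star L t m ->
  semi_matched S s m a s' -> semi_matched R s t a s'.
Proof.
  intros HSR Hst Htm (t1 & t2 & t' & Hx & Hstep & Hy & Hs't').
  exists t1, t2, t'. rewrite gen_tau_iff in Hx, Hy.
  destruct Hx as [Hmt1 Hx], Hy as [Ht2t' Hy].
  split; [|split; [exact Hstep | split]].
  - rewrite gen_tau_iff. split; [now apply rt_trans with m|].
    intros Hb. split; [exact Hst | apply HSR, (proj2 (Hx Hb))].
  - rewrite gen_tau_iff. split; [exact Ht2t'|]. intros Hb. destruct (Hy Hb). split; now apply HSR.
  - now apply HSR.
Qed.

Lemma semi_matched_tau (R : St L -> St L -> Prop) (s t s' : St L) :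
  semi_matched R s t (tau L) s' -> exists t', tau_star L t t' /\ R s' t'.
Proof.
  intros (t1 & t2 & t' & Hx & Hstep & Hy & Hs't').
  exists t'. split; [|exact Hs't'].
  apply rt_trans with t1; [exact (gen_tau_tau_star _ _ _ _ _ _ Hx)|].
  apply rt_trans with t2; [|exact (gen_tau_tau_star _ _ _ _ _ _ Hy)].
  destruct Hstep as [Hstep | [_ <-]]; [now apply rt_step | apply rt_refl].
Qed.

Lemma semi_bisim_tau_star (R : St L -> St L -> Prop) (u u' t : St L) :
  semi_bisim R -> tau_star L u u' -> R u t -> exists t', tau_star L t t' /\ R u' t'.
Proof.
  intros HR Huu'. revert t. unfold tau_star in Huu'.
  induction Huu' as [u u' Hstep | u | u v u' _ IH1 _ IH2]; intros t Hut.
  - apply semi_matched_tau with u. now apply HR.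
  - exists t. split; [apply rt_refl | exact Hut].
  - destruct (IH1 t Hut) as (w & Htw & Hvw).
    destruct (IH2 w Hvw) as (t' & Hwt' & Hu't').
    exists t'. split; [now apply rt_trans with w | exact Hu't'].
Qed.

Lemma semi_bisim_step_or_idle (R : St L -> St L -> Prop) (s t : St L) (a : Act L)
    (s' : St L) :
  semi_bisim R -> R s t -> step_or_idle s a s' -> semi_matched R s t a s'.
Proof.
  intros HR Hst [Hstep | [-> <-]]; [now apply HR | now apply semi_matched_idle].
Qed.

Lemma generic_bisim_semi_bisim (R : St L -> St L -> Prop) :
  generic_bisim L x y R -> semi_bisim R.
Proof.
  intros [Hsym HR]. split; [exact Hsym|].
  intros s t a s' Hst Hstep.
  destruct (HR s t a s' Hst Hstep)
    as [[-> Hs't] | (t' & t1 & t2 & Hx & Ht1t2 & Hy & Hs't')].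
  - now apply semi_matched_idle.
  - exists t1, t2, t'. split; [exact Hx|]. split; [now left|]. now split.
Qed.

Lemma semi_bisimilar_semi_bisim : semi_bisim semi_bisimilar.
Proof.
  split.
  - intros s t (R & HR & Hst). exists R. split; [exact HR | now apply (proj1 HR)].
  - intros s t a s' (R & HR & Hst) Hstep.
    assert (HRS : forall p q, R p q -> semi_bisimilar p q)
      by (intros p q Hpq; now exists R).
    apply semi_matched_prepend with R t; [exact HRS | now apply HRS | apply rt_refl |].
    now apply HR.
Qed.

Lemma semi_bisimilar_sym (s t : St L) : semi_bisimilar s t -> semi_bisimilar t s.
Proof. apply (proj1 semi_bisimilar_semi_bisim). Qed.

Lemma semi_bisimilar_trans (s u t : St L) :
  semi_bisimilar s u -> semi_bisimilar u t -> semi_bisimilar s t.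
Proof.
  intros Hsu Hut.
  pose (C := fun p q => exists m, semi_bisimilar p m /\ semi_bisimilar m q).
  exists C. split; [|now exists u]. split.
  - intros p q (m & Hpm & Hmq). exists m. split; now apply semi_bisimilar_sym.
  - clear s u t Hsu Hut. intros s t a s' (u & Hsu & Hut) Hstep.
    pose proof semi_bisimilar_semi_bisim as HS.
    destruct (proj2 HS s u a s' Hsu Hstep)
      as (u1 & u2 & u' & Hx & Hu12 & Hy & Hs'u').
    rewrite gen_tau_iff in Hx, Hy. destruct Hx as [Huu1 Hx], Hy as [Hu2u' Hy].
    destruct (semi_bisim_tau_star _ u u1 t HS Huu1 Hut) as (w & Htw & Hu1w).
    destruct (semi_bisim_step_or_idle _ u1 w a u2 HS Hu1w Hu12)
      as (w1 & w2 & w' & Hx' & Hw12 & Hy' & Hu2w').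
    rewrite gen_tau_iff in Hx', Hy'. destruct Hx' as [Hww1 Hx'], Hy' as [Hw2w' Hy'].
    destruct (semi_bisim_tau_star _ u2 u' w' HS Hu2u' Hu2w') as (T & Hw'T & Hu'T).
    exists w1, w2, T. rewrite !gen_tau_iff.
    split; [split; [now apply rt_trans with w|] |].
    { intros Hb. split; [now exists u|].
      exists u1. split; [apply (Hx Hb) | apply (Hx' Hb)]. }
    split; [exact Hw12|].
    split; [split; [now apply rt_trans with w'|] | now exists u'].
    intros Hb. split; [|now exists u'].
    exists u2. split; [apply (Hy Hb) | apply (Hy' Hb)].
Qed.

Lemma semi_bisimilar_refl (s : St L) : semi_bisimilar s s.
Proof.
  exists eq. split; [|reflexivity]. split; [now intros p q ->|].
  intros p q a p' <- Hstep. exists p, p', p'. rewrite !gen_tau_iff.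
  split; [split; [apply rt_refl | now split]|].
  split; [now left|].
  split; [split; [apply rt_refl | now split] | reflexivity].
Qed.

Lemma semi_bisimilar_stutter (u v w : St L) :
  semi_bisimilar u w -> tau_star L u v -> tau_star L v w -> semi_bisimilar v w.
Proof.
  intros Huw Huv Hvw.
  pose (Between p q := tau_star L u p /\ tau_star L p w /\ semi_bisimilar q w).
  pose (R p q := semi_bisimilar p q \/ Between p q \/ Between q p).
  exists R. split.
  2:{ right; left. split; [exact Huv | split; [exact Hvw | apply semi_bisimilar_refl]]. }
  split.
  - intros p q [Hpq | [Hpq | Hqp]].
    + left. now apply semi_bisimilar_sym.
    + now right; right.
    + now right; left.
  - intros s t a s' Hst Hstep.
    assert (Hm : exists m, tau_star L t m /\ semi_bisimilar s m).
    { destruct Hst as [Hst | [(Hus & _ & Htw) | (_ & Htw & Hsw)]].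
      - exists t. split; [apply rt_refl | exact Hst].
      - apply semi_bisim_tau_star with u; [apply semi_bisimilar_semi_bisim | exact Hus |].
        apply semi_bisimilar_trans with w; [exact Huw | now apply semi_bisimilar_sym].
      - now exists w. }
    destruct Hm as (m & Htm & Hsm).
    apply semi_matched_prepend with semi_bisimilar m;
      [intros p q Hpq; now left | exact Hst | exact Htm |].
    now apply semi_bisimilar_semi_bisim.
Qed.

Lemma semi_bisimilar_between (s p v q : St L) :
  semi_bisimilar s p -> semi_bisimilar s q ->
  tau_star L p v -> tau_star L v q -> semi_bisimilar s v.
Proof.
  intros Hsp Hsq Hpv Hvq.
  apply semi_bisimilar_trans with q; [exact Hsq|].
  apply semi_bisimilar_sym, semi_bisimilar_stutter with p; [|exact Hpv | exact Hvq].
  apply semi_bisimilar_trans with s; [now apply semi_bisimilar_sym | exact Hsq].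
Qed.

Lemma gen_tau_semi_bisimilar_split (z : xy) (s p v q : St L) :
  gen_tau L z semi_bisimilar s p q -> tau_star L p v -> tau_star L v q ->
  gen_tau L z semi_bisimilar s p v /\ gen_tau L z semi_bisimilar s v q.
Proof.
  rewrite !gen_tau_iff. intros [_ Hends] Hpv Hvq.
  assert (Hsv : z = b -> semi_bisimilar s v).
  { intros Hb. destruct (Hends Hb) as [Hsp Hsq].
    now apply semi_bisimilar_between with p q. }
  split; split; try assumption; intros Hb; split;
    solve [apply (Hends Hb) | apply (Hsv Hb)].
Qed.

(* An idle answer t ->> t1 = t2 ->> t' becomes a genuine tau-step by cutting the
   path at its last step before t1, or at its first step after t1 if t = t1. *)
Lemma semi_bisimilar_generic_bisim : generic_bisim L x y semi_bisimilar.
Proof.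
  split; [apply semi_bisimilar_semi_bisim|].
  intros s t a s' Hst Hstep.
  destruct (proj2 semi_bisimilar_semi_bisim s t a s' Hst Hstep)
    as (t1 & t2 & t' & Hx & [Ht12 | [-> <-]] & Hy & Hs't').
  { right. now exists t', t1, t2. }
  destruct (clos_refl_trans_last _ _ _ _ (gen_tau_tau_star _ _ _ _ _ _ Hx))
    as [<- | (v & Htv & Hvt1)].
  - destruct (clos_refl_trans_first _ _ _ _ (gen_tau_tau_star _ _ _ _ _ _ Hy))
      as [<- | (v & Htv & Hvt')].
    + left. now split.
    + right. exists t', t, v.
      split; [rewrite gen_tau_iff; split; [apply rt_refl | now split]|].
      split; [exact Htv|]. split; [|exact Hs't'].
      apply (gen_tau_semi_bisimilar_split _ _ _ _ _ Hy); [now apply rt_step | exact Hvt'].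
  - right. exists t', v, t1.
    split; [apply (gen_tau_semi_bisimilar_split _ _ _ _ _ Hx); [exact Htv | now apply rt_step]|].
    split; [exact Hvt1|]. now split.
Qed.

End SemiBisimulation.

Theorem lemma4p8 (L : LTS) (x y : xy) (k : nat) (t : nat -> St L) :
  (forall i, i < k -> step L (t i) (tau L) (t (S i))) ->
  bisimilar L x y (t 0) (t k) ->
  forall i j, i <= k -> j <= k -> bisimilar L x y (t i) (t j).
Proof.
  intros Hchain (R & HR & H0k) i j Hi Hj.
  assert (Hpath : forall n m, n <= m -> m <= k -> tau_star L (t n) (t m))
    by exact (clos_refl_trans_chain _ _ t k Hchain).
  assert (Hsb : forall n, n <= k -> semi_bisimilar L x y (t n) (t k)).
  { intros n Hn. apply semi_bisimilar_stutter with (t 0).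
    - exists R. split; [now apply generic_bisim_semi_bisim | exact H0k].
    - apply Hpath; lia.
    - apply Hpath; lia. }
  exists (semi_bisimilar L x y). split; [apply semi_bisimilar_generic_bisim|].
  apply semi_bisimilar_trans with (t k); [now apply Hsb | now apply semi_bisimilar_sym, Hsb].
Qed.
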